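(* The generating function $\sum_{n\ge0}2^{n(n+3)/2}x^n$ (sequence $1,4,32,512,16384,\dots$) has, as formal power series, the Jacobi continued fraction expansion $$\sum_{n\ge0}2^{n(n+3)/2}x^n=\cfrac{1}{1-\beta_0x-\cfrac{\lambda_1x^2}{1-\beta_1x-\cfrac{\lambda_2x^2}{1-\beta_2x-\cdots}}},\qquad \beta_n=2^{n+1}(2^{n+1}+2^{n}-1),\ \ \lambda_n=2^{3n+1}(2^{n}-1),$$ (so $\beta_0,\beta_1,\beta_2,\dots=4,20,88,368,\dots$ and $\lambda_1,\lambda_2,\dots=16,384,7168,\dots$), and equivalently the Stieltjes continued fraction expansion $$\sum_{n\ge0}2^{n(n+3)/2}x^n=\cfrac{1}{1-\cfrac{b(0)x}{1-\cfrac{b(1)x}{1-\cfrac{b(2)x}{1-\cdots}}}},\qquad b(n)=2^{n+2}-2^{(n+1)/2}\bigl(1-(-1)^n\bigr)\ (n\ge0),$$ so that $b(0),b(1),b(2),\dots=4,4,16,24,64,\dots$. *)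

From HB Require Import structures.
From mathcomp Require Import all_boot all_order all_algebra.
Set Implicit Arguments. Unset Strict Implicit. Unset Printing Implicit Defensive.
Import Order.TTheory GRing.Theory Num.Theory.
Local Open Scope ring_scope.

Definition series := nat -> int.

Definition s_one : series := fun n => (n == 0%N)%:R.
Definition s_x : series := fun n => (n == 1%N)%:R.

Definition s_add (a b : series) : series := fun n => a n + b n.
Definition s_sub (a b : series) : series := fun n => a n - b n.
Definition s_scale (c : int) (a : series) : series := fun n => c * a n.
Definition s_mul (a b : series) : series :=
  fun n => \sum_(i < n.+1) a i * b (n - i)%N.

(* list of the first n+1 coefficients of the multiplicative inverse of a
   series a with constant term 1 *)
Fixpoint inv_list (a : series) (n : nat) : seq int :=
  match n with
  | 0 => [:: 1]
  | m.+1 => let l := inv_list a m in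
            rcons l (- \sum_(1 <= i < m.+2) a i * nth 0 l (m.+1 - i)%N)
  end.

Definition s_inv (a : series) : series := fun n => nth 0 (inv_list a n) n.

Fixpoint Jconv (beta lam : nat -> int) (N k : nat) : series :=
  match N with
  | 0 => s_one
  | M.+1 => s_inv (s_sub (s_sub s_one (s_scale (beta k) s_x))
                        (s_scale (lam k.+1)
                           (s_mul (s_mul s_x s_x) (Jconv beta lam M k.+1))))
  end.

Fixpoint Sconv (b : nat -> int) (N k : nat) : series :=
  match N with
  | 0 => s_one
  | M.+1 => s_inv (s_sub s_one (s_scale (b k) (s_mul s_x (Sconv b M k.+1))))
  end.

(* f is the (formal power series) value of the infinite J-fraction:
   each coefficient of the convergents eventually equals that of f. *)
Definition has_Jfraction (beta lam : nat -> int) (f : series) : Prop :=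
  forall n, exists N0, forall N, (N0 <= N)%N -> Jconv beta lam N 0 n = f n.

Definition has_Sfraction (b : nat -> int) (f : series) : Prop :=
  forall n, exists N0, forall N, (N0 <= N)%N -> Sconv b N 0 n = f n.

Definition gf4 : series := fun n => 2 ^+ ((n * (n + 3)) %/ 2)%N.
Definition beta4 (n : nat) : int := 2 ^+ n.+1 * (2 ^+ n.+1 + 2 ^+ n - 1).
Definition lam4 (n : nat) : int := 2 ^+ (3 * n + 1)%N * (2 ^+ n - 1).
(* b(n) = 2^{n+2} - 2^{(n+1)/2} (1 - (-1)^n); the exponent (n+1)/2 is only
   relevant when n is odd (otherwise the factor 1-(-1)^n vanishes). *)
Definition b4 (n : nat) : int := 2 ^+ (n + 2)%N - 2 ^+ ((n + 1) %/ 2)%N * (1 - (-1) ^+ n).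

From HB Require Import structures.
From mathcomp Require Import all_boot all_order all_algebra.
From mathcomp Require Import ring zify.
Set Implicit Arguments. Unset Strict Implicit. Unset Printing Implicit Defensive.
Import Order.TTheory GRing.Theory Num.Theory.
Local Open Scope ring_scope.

(* A continued fraction 1/(1 - b_0 x/(1 - b_1 x/(1 - ...))) is
   identified through a family of "tails" P_k with P_0 = 1 and
   P_k = P_(k+1) - b_k x P_(k+2): the depth-N convergent at level k then
   sends P_k to P_(k+1) modulo x^N, so the whole fraction equals P_1.  The
   same holds for J-fractions with the three-term recurrence
   Q_k = (1 - beta_k x) Q_(k+1) - lam_(k+1) x^2 Q_(k+2), and the odd tails of
   an S-fraction satisfy such a recurrence (even contraction).

   Finally the
   explicit tails 2^(n(n+3)/2 + e n) [n+j choose j]_2 are shown to satisfy the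
   S-recurrence with the given b(n), which yields both expansions. *)

Section CongruenceModXn.
Variable R : comNzRingType.

Definition congX (M : nat) (p q : {poly R}) : Prop :=
  exists r : {poly R}, p - q = r * 'X^M.

Lemma congX_refl M p : congX M p p.
Proof. by exists 0; rewrite subrr mul0r. Qed.

Lemma congX_sym M p q : congX M p q -> congX M q p.
Proof. by case=> r h; exists (- r); rewrite mulNr -h opprB. Qed.

Lemma congX_trans M p q s : congX M p q -> congX M q s -> congX M p s.
Proof. by case=> r h [t h']; exists (r + t); rewrite mulrDl -h -h' addrA subrK. Qed.

Lemma congXB M p q p' q' : congX M p q -> congX M p' q' -> congX M (p - p') (q - q').
Proof. by case=> r h [t h']; exists (r - t); rewrite mulrBl -h -h'; ring. Qed.

Lemma congXM M p q p' q' : congX M p q -> congX M p' q' -> congX M (p * p') (q * q').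
Proof.
case=> r h [t h']; exists (r * p' + q * t).
by rewrite mulrDl -mulrA (mulrC p') mulrA -h -mulrA -h'; ring.
Qed.

Lemma congX_le M M' p q : (M' <= M)%N -> congX M p q -> congX M' p q.
Proof. by move=> hM [r h]; exists (r * 'X^(M - M')); rewrite h -mulrA -exprD subnK. Qed.

Lemma congX_mulX M p q : congX M p q -> congX M.+1 ('X * p) ('X * q).
Proof. by case=> r h; exists r; rewrite -mulrBr h exprS; ring. Qed.

Lemma congXP M p q : congX M p q <-> forall i, (i < M)%N -> p`_i = q`_i.
Proof.
split=> [[r h] i hi|h].
  by apply/eqP; rewrite -subr_eq0 -coefB h coefMXn hi.
exists (drop_poly M (p - q)); rewrite -{1}(poly_take_drop M (p - q)).
suff -> : take_poly M (p - q) = 0 by rewrite add0r.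
apply/polyP => i; rewrite coef_take_poly coef0 coefB.
by case: ifP => // /h ->; rewrite subrr.
Qed.

End CongruenceModXn.

(* The truncation of a series to a polynomial of degree < M; it is a ring
   morphism modulo X^M, which lets us compute with series via [ring]. *)
Definition trunc (M : nat) (a : series) : {poly int} := \poly_(i < M) a i.

Lemma coef_trunc M a i : (trunc M a)`_i = if (i < M)%N then a i else 0.
Proof. by rewrite coef_poly. Qed.

Lemma trunc_congX M a (p : {poly int}) :
  (forall i, (i < M)%N -> a i = p`_i) -> congX M (trunc M a) p.
Proof. by move=> h; apply/congXP => i hi; rewrite coef_trunc hi h. Qed.

Lemma congX_trunc M a b :
  congX M (trunc M a) (trunc M b) -> forall i, (i < M)%N -> a i = b i.
Proof. by move/congXP => h i hi; move: (h i hi); rewrite !coef_trunc hi. Qed.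

Lemma trunc_ext M a b : (forall i, a i = b i) -> trunc M a = trunc M b.
Proof. by move=> h; apply/polyP => i; rewrite !coef_trunc h. Qed.

Lemma trunc_one M : congX M (trunc M s_one) 1.
Proof. by apply: trunc_congX => i _; rewrite coef1. Qed.

Lemma trunc_x M : congX M (trunc M s_x) 'X.
Proof. by apply: trunc_congX => i _; rewrite coefX. Qed.

Lemma trunc_sub M a b : congX M (trunc M (s_sub a b)) (trunc M a - trunc M b).
Proof. by apply: trunc_congX => i hi; rewrite coefB !coef_trunc hi. Qed.

Lemma trunc_scale M c a : congX M (trunc M (s_scale c a)) (c%:P * trunc M a).
Proof. by apply: trunc_congX => i hi; rewrite coefCM !coef_trunc hi. Qed.

Lemma trunc_mul M a b : congX M (trunc M (s_mul a b)) (trunc M a * trunc M b).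
Proof.
apply: trunc_congX => i hi; rewrite coefM; apply: eq_bigr => j _.
rewrite !coef_trunc (leq_ltn_trans (leq_subr _ _) hi).
by rewrite (leq_ltn_trans _ hi) // -ltnS.
Qed.

Definition xshift (a : series) : series := fun n => if n is n'.+1 then a n' else 0.

Lemma trunc_xshift M a : congX M (trunc M (xshift a)) ('X * trunc M a).
Proof.
apply: trunc_congX => -[|i] hi; rewrite coefXM //=.
by rewrite coef_trunc ltnW.
Qed.

Lemma mul_one_r a i : s_mul a s_one i = a i.
Proof.
rewrite /s_mul big_ord_recr subnn /= mulr1 big1 ?add0r // => j _.
by rewrite /s_one subn_eq0 leqNgt ltn_ord mulr0.
Qed.

Lemma size_inv_list a n : size (inv_list a n) = n.+1.
Proof. by elim: n => //= n IH; rewrite size_rcons IH. Qed.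

Lemma inv_list_prefix a m n i : (m <= n)%N -> (i <= m)%N ->
  nth 0 (inv_list a n) i = nth 0 (inv_list a m) i.
Proof.
elim: n => [|n IH] hmn him; first by move: hmn; rewrite leqn0 => /eqP ->.
case: (ltngtP m n.+1) hmn => // [hlt|->] _ //.
by rewrite /= nth_rcons size_inv_list (leq_ltn_trans him hlt) IH.
Qed.

Lemma s_invS a m :
  s_inv a m.+1 = - \sum_(1 <= i < m.+2) a i * s_inv a (m.+1 - i)%N.
Proof.
rewrite /s_inv /= nth_rcons size_inv_list ltnn eqxx; congr (- _).
rewrite !big_nat; apply: eq_bigr => i /andP[h1 h2]; congr (_ * _).
by rewrite (inv_list_prefix a (m := (m.+1 - i)%N)) //; lia.
Qed.

Lemma s_inv_mul a : a 0%N = 1 -> forall n, s_mul a (s_inv a) n = s_one n.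
Proof.
move=> a0 [|m]; first by rewrite /s_mul big_ord1 a0 mul1r.
rewrite /s_mul -(big_mkord xpredT (fun i => a i * s_inv a (m.+1 - i)%N)).
by rewrite big_ltn // a0 mul1r subn0 s_invS addNr.
Qed.

Lemma trunc_inv M a : a 0%N = 1 -> congX M (trunc M a * trunc M (s_inv a)) 1.
Proof.
move=> a0; apply: congX_trans (congX_sym (trunc_mul _ _ _)) _.
apply: congX_trans (trunc_one M); apply/congXP => i hi.
by rewrite !coef_trunc hi s_inv_mul.
Qed.

Lemma s_inv_mul_congX M (A F G : series) : A 0%N = 1 ->
  congX M (trunc M A * trunc M G) (trunc M F) ->
  forall i, (i < M)%N -> s_mul (s_inv A) F i = G i.
Proof.
move=> A0 hAG; apply: congX_trunc.
apply: congX_trans (trunc_mul _ _ _) _.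
apply: congX_trans (congXM (congX_refl _ _) (congX_sym hAG)) _.
rewrite mulrA [trunc M (s_inv A) * _]mulrC.
apply: congX_trans (congXM (trunc_inv M A0) (congX_refl _ _)) _.
by rewrite mul1r; apply: congX_refl.
Qed.

(* Suppose the tails F0, F1, F2 satisfy
   F0 = (1 - u) F1 - x w F2, and the deeper part S of the fraction satisfies
   S F1 = F2 up to x^N.  Then the fraction 1/(1 - u - x w S) satisfies
   F0 / (1 - u - x w S) = F1 up to x^(N+1): the factor x gains one order. *)
Lemma frac_step N (A F0 F1 F2 S : series) (u w : {poly int}) :
  A 0%N = 1 ->
  congX N.+1 (trunc N.+1 A) (1 - u - 'X * w * trunc N.+1 S) ->
  congX N.+1 (trunc N.+1 F0) ((1 - u) * trunc N.+1 F1 - 'X * w * trunc N.+1 F2) ->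
  (forall i, (i < N)%N -> s_mul S F1 i = F2 i) ->
  forall i, (i < N.+1)%N -> s_mul (s_inv A) F0 i = F1 i.
Proof.
move=> A0 hA hF0 hS; apply: s_inv_mul_congX => //.
have hSF : congX N (trunc N.+1 S * trunc N.+1 F1) (trunc N.+1 F2).
  apply: congX_trans (congX_sym (congX_le (leqnSn N) (trunc_mul _ S F1))) _.
  by apply/congXP => j hj; rewrite !coef_trunc ltnS ltnW // hS.
apply: congX_trans (congXM hA (congX_refl _ _)) _; apply: congX_trans _ (congX_sym hF0).
set tS := trunc N.+1 S; set tF1 := trunc N.+1 F1; set tF2 := trunc N.+1 F2.
have -> : (1 - u - 'X * w * tS) * tF1 = (1 - u) * tF1 - w * ('X * (tS * tF1)) by ring.
have -> : (1 - u) * tF1 - 'X * w * tF2 = (1 - u) * tF1 - w * ('X * tF2) by ring.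
exact: congXB (congX_refl _ _) (congXM (congX_refl _ w) (congX_mulX hSF)).
Qed.

Lemma Sconv_tails (b : nat -> int) (P : nat -> series) :
  (forall k n, P k n = P k.+1 n - b k * xshift (P k.+2) n) ->
  forall N k i, (i < N)%N -> s_mul (Sconv b N k) (P k) i = P k.+1 i.
Proof.
move=> Prec; elim=> [//|N IH] k.
apply: (frac_step (S := Sconv b N k.+1) (F2 := P k.+2) (u := 0) (w := (b k)%:P)).
- by rewrite /s_sub /s_scale (_ : s_mul _ _ 0%N = 0) ?mulr0 ?subr0 // /s_mul big_ord1 mul0r.
- rewrite subr0 (mulrC 'X) -mulrA.
  apply: congX_trans (trunc_sub _ _ _) _; apply: congXB (trunc_one _) _.
  apply: congX_trans (trunc_scale _ _ _) _; apply: congXM (congX_refl _ _) _.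
  apply: congX_trans (trunc_mul _ _ _) _; exact: congXM (trunc_x _) (congX_refl _ _).
- rewrite (trunc_ext _ (Prec k)) subr0 mul1r (mulrC 'X) -mulrA.
  apply: congX_trans (trunc_sub _ _ _) _; apply: congXB (congX_refl _ _) _.
  apply: congX_trans (trunc_scale _ _ _) _; exact: congXM (congX_refl _ _) (trunc_xshift _ _).
- exact: IH.
Qed.

Lemma Jconv_tails (beta lam : nat -> int) (Q : nat -> series) :
  (forall k n, Q k n = Q k.+1 n - beta k * xshift (Q k.+1) n
                       - lam k.+1 * xshift (xshift (Q k.+2)) n) ->
  forall N k i, (i < N)%N -> s_mul (Jconv beta lam N k) (Q k) i = Q k.+1 i.
Proof.
move=> Qrec; elim=> [//|N IH] k.
apply: (frac_step (S := Jconv beta lam N k.+1) (F2 := Q k.+2)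
                   (u := (beta k)%:P * 'X) (w := (lam k.+1)%:P * 'X)).
- by rewrite /s_sub /s_scale /s_mul !big_ord1 /s_x /s_one /= !mul0r !mulr0 !subr0.
- apply: congX_trans (trunc_sub _ _ _) _; apply: congXB.
    apply: congX_trans (trunc_sub _ _ _) _; apply: congXB (trunc_one _) _.
    apply: congX_trans (trunc_scale _ _ _) _; exact: congXM (congX_refl _ _) (trunc_x _).
  apply: congX_trans (trunc_scale _ _ _) _.
  set tS := trunc N.+1 (Jconv beta lam N k.+1).
  have -> : 'X * ((lam k.+1)%:P * 'X) * tS = (lam k.+1)%:P * ('X * 'X * tS) by ring.
  apply: congXM (congX_refl _ _) _; apply: congX_trans (trunc_mul _ _ _) _.
  apply: congXM _ (congX_refl _ _); apply: congX_trans (trunc_mul _ _ _) _.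
  exact: congXM (trunc_x _) (trunc_x _).
- rewrite (trunc_ext _ (Qrec k)).
  set t1 := trunc N.+1 (Q k.+1); set t2 := trunc N.+1 (Q k.+2).
  have -> : (1 - (beta k)%:P * 'X) * t1 - 'X * ((lam k.+1)%:P * 'X) * t2
          = t1 - (beta k)%:P * ('X * t1) - (lam k.+1)%:P * ('X * ('X * t2)) by ring.
  apply: congX_trans (trunc_sub _ _ _) _; apply: congXB.
    apply: congX_trans (trunc_sub _ _ _) _; apply: congXB (congX_refl _ _) _.
    apply: congX_trans (trunc_scale _ _ _) _; exact: congXM (congX_refl _ _) (trunc_xshift _ _).
  apply: congX_trans (trunc_scale _ _ _) _; apply: congXM (congX_refl _ _) _.
  apply: congX_trans (trunc_xshift _ _) _; apply: congXM (congX_refl _ _) _.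
  exact: trunc_xshift.
- exact: IH.
Qed.

Lemma has_Sfraction_tails (b : nat -> int) (P : nat -> series) (f : series) :
  P 0%N = s_one ->
  (forall k n, P k n = P k.+1 n - b k * xshift (P k.+2) n) ->
  (forall n, P 1%N n = f n) ->
  has_Sfraction b f.
Proof.
move=> P0 Prec Pf n; exists n.+1 => N hN.
by have := @Sconv_tails b P Prec N 0 n hN; rewrite P0 mul_one_r Pf.
Qed.

Lemma has_Jfraction_tails (beta lam : nat -> int) (Q : nat -> series) (f : series) :
  Q 0%N = s_one ->
  (forall k n, Q k n = Q k.+1 n - beta k * xshift (Q k.+1) n
                       - lam k.+1 * xshift (xshift (Q k.+2)) n) ->
  (forall n, Q 1%N n = f n) ->
  has_Jfraction beta lam f.
Proof.
move=> Q0 Qrec Qf n; exists n.+1 => N hN.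
by have := @Jconv_tails beta lam Q Qrec N 0 n hN; rewrite Q0 mul_one_r Qf.
Qed.

(* Even contraction: an S-fraction with coefficients b equals the J-fraction
   with beta_0 = b_0, beta_k = b_(2k-1) + b_(2k), lam_k = b_(2k-2) b_(2k-1);
   its tails are the odd-indexed tails of the S-fraction. *)
Definition contract_beta (b : nat -> int) (k : nat) : int :=
  if k is k'.+1 then b (k'.*2).+1 + b (k'.*2).+2 else b 0%N.
Definition contract_lam (b : nat -> int) (k : nat) : int :=
  b (k.-1).*2 * b (k.-1.*2).+1.
Definition contract_tails (P : nat -> series) (k : nat) : series :=
  if k is k'.+1 then P (k'.*2).+1 else P 0%N.

Lemma contract_tails_rec (b : nat -> int) (P : nat -> series) :
  (forall k n, P k n = P k.+1 n - b k * xshift (P k.+2) n) ->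
  forall k n, contract_tails P k n =
    contract_tails P k.+1 n - contract_beta b k * xshift (contract_tails P k.+1) n
    - contract_lam b k.+1 * xshift (xshift (contract_tails P k.+2)) n.
Proof.
move=> Prec.
have Pshift k n : xshift (P k.+1) n = xshift (P k) n + b k * xshift (xshift (P k.+2)) n.
  by case: n => [|n] /=; rewrite ?mulr0 ?addr0 // (Prec k n) subrK.
case=> [|k] n; rewrite /contract_lam /= ?double0 ?doubleS.
  by rewrite (Prec 0%N n) (Pshift 1%N n); ring.
by rewrite (Prec (k.*2).+1 n) (Prec (k.*2).+2 n) (Pshift (k.*2).+3 n); ring.
Qed.

Lemma has_Jfraction_contract (b beta lam : nat -> int) (P : nat -> series) (f : series) :
  (forall k, beta k = contract_beta b k) ->
  (forall k, lam k.+1 = contract_lam b k.+1) ->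
  P 0%N = s_one ->
  (forall k n, P k n = P k.+1 n - b k * xshift (P k.+2) n) ->
  (forall n, P 1%N n = f n) ->
  has_Jfraction beta lam f.
Proof.
move=> hbeta hlam P0 Prec Pf; apply: (has_Jfraction_tails (Q := contract_tails P)) => //.
by move=> k n; rewrite hbeta hlam; exact: contract_tails_rec.
Qed.

(* Gaussian binomial coefficients: [qbin q n j] is [n+j choose j]_q, given
   by the q-Pascal recurrence [n+j+1 choose j+1]_q = [n+j choose j]_q
   + q^(j+1) [n+j choose j+1]_q. *)
Section GaussianBinomial.
Variable q : int.

Fixpoint qbin (n : nat) : nat -> int :=
  match n with
  | 0 => fun _ => 1
  | n'.+1 => fix qbin_n j := match j with
                           | 0 => 1
                           | j'.+1 => qbin_n j' + q ^+ j'.+1 * qbin n' j'.+1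
                           end
  end.

Lemma qbin0n j : qbin 0 j = 1. Proof. by []. Qed.
Lemma qbinn0 n : qbin n 0 = 1. Proof. by case: n. Qed.
Lemma qbinSS n j : qbin n.+1 j.+1 = qbin n.+1 j + q ^+ j.+1 * qbin n j.+1.
Proof. by []. Qed.

Definition qprod (n j : nat) : int := \prod_(i < j) (q ^+ (n + i.+1) - 1).

Lemma qprodSr n j : qprod n j.+1 = qprod n j * (q ^+ (n + j.+1) - 1).
Proof. by rewrite /qprod big_ord_recr. Qed.

Lemma qprodSl n j : qprod n j.+1 = (q ^+ n.+1 - 1) * qprod n.+1 j.
Proof.
rewrite /qprod big_ord_recl addn1; congr (_ * _).
by apply: eq_bigr => i _; rewrite lift0 addSnnS.
Qed.

(* The product formula [n+j choose j]_q = qprod n j / qprod 0 j, in a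
   division-free form valid for every q. *)
Lemma qbin_prod n j : qbin n j * qprod 0 j = qprod n j.
Proof.
elim: n j => [|n IHn] j; first by rewrite qbin0n mul1r.
elim: j => [|j IHj]; first by rewrite qbinn0 /qprod !big_ord0 mulr1.
rewrite qbinSS mulrDl -mulrA (IHn j.+1) qprodSr mulrA IHj.
rewrite (qprodSl n j) (qprodSr n.+1 j) add0n exprD; ring.
Qed.

Hypothesis q_gt1 : 1 < q.

Lemma qprod0_neq0 j : qprod 0 j != 0.
Proof.
apply/prodf_neq0 => i _; rewrite subr_eq0 add0n.
by rewrite gt_eqF // exprn_egt1.
Qed.

(* q-absorption: (q^(n+1) - 1) [n+j+1 choose j]_q = (q^(j+1) - 1) [n+j+1 choose j+1]_q,
   obtained from the product formula by cancelling the nonzero qprod 0 (j+1). *)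
Lemma qbin_absorb n j :
  (q ^+ n.+1 - 1) * qbin n.+1 j = (q ^+ j.+1 - 1) * qbin n j.+1.
Proof.
apply: (mulIf (qprod0_neq0 j.+1)).
rewrite -!mulrA (qbin_prod n j.+1) qprodSr (mulrA (qbin _ _)) (qbin_prod n.+1 j).
by rewrite qprodSl add0n; ring.
Qed.

End GaussianBinomial.

(* With e(n) = n(n+3)/2 and
   G(n,j) = [n+j choose j]_2, the tails are P_0 = 1 and
   P_(2j+1)(n) = 2^(e(n) + j n) G(n,j),  P_(2j+2)(n) = 2^(e(n) + (j+1) n) G(n,j);
   in particular P_1 is the series of the theorem. *)
Definition expo4 (n : nat) : nat := ('C(n, 2) + 2 * n)%N.

Lemma expo4S m : expo4 m.+1 = (expo4 m + m + 2)%N.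
Proof. by rewrite /expo4 binS bin1; lia. Qed.

Lemma expo4_half n : ((n * (n + 3)) %/ 2)%N = expo4 n.
Proof.
suff -> : (n * (n + 3) = expo4 n * 2)%N by rewrite mulnK.
by elim: n => [|n IH] //; rewrite expo4S; nia.
Qed.

Definition tail4 (j e : nat) : series :=
  fun n => 2 ^+ (expo4 n + e * n) * qbin 2 n j.

Definition tails4 (k : nat) : series :=
  if k is k'.+1 then tail4 k'./2 (uphalf k') else s_one.

Lemma tail4_0 j e : tail4 j e 0%N = 1.
Proof. by rewrite /tail4 muln0 qbin0n mulr1. Qed.

Lemma tail4S j e m :
  tail4 j e m.+1 = 2 ^+ (expo4 m + e * m) * (2 ^+ m * 2 ^+ 2 * 2 ^+ e) * qbin 2 m.+1 j.
Proof.
rewrite /tail4 expo4S (_ : (_ + _ + 2 + e * m.+1 = expo4 m + e * m + (m + 2 + e))%N).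
  by rewrite !exprD mulrA.
by rewrite mulnS; lia.
Qed.

Lemma pow_expo4S e m : 2 ^+ (expo4 m + e.+1 * m) = 2 ^+ (expo4 m + e * m) * 2 ^+ m :> int.
Proof. by rewrite mulSn addnCA addnC exprD mulrC. Qed.

(* The two recurrences P_k = P_(k+1) - b_k x P_(k+2), for k odd and k even
   positive; the odd one is q-absorption, the even one is q-Pascal. *)
Lemma tail4_rec_odd j n :
  tail4 j j n = tail4 j j.+1 n - 2 ^+ j.+2 * (2 ^+ j.+1 - 1) * xshift (tail4 j.+1 j.+1) n.
Proof.
case: n => [|m]; first by rewrite !tail4_0 mulr0 subr0.
have h := qbin_absorb (isT : (1 < 2 :> int)) m j.
rewrite /= !tail4S /tail4 !pow_expo4S; apply/subr0_eq.
transitivity (2 ^+ (expo4 m + j * m) * 2 ^+ m * 2 ^+ j.+2 *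
  ((2 ^+ j.+1 - 1) * qbin 2 m j.+1 - (2 ^+ m.+1 - 1) * qbin 2 m.+1 j)).
  by rewrite !exprS; ring.
by rewrite h subrr mulr0.
Qed.

Lemma tail4_rec_even j n :
  tail4 j j.+1 n = tail4 j.+1 j.+1 n - 2 ^+ ((j.+1).*2 + 2) * xshift (tail4 j.+1 j.+2) n.
Proof.
case: n => [|m]; first by rewrite !tail4_0 mulr0 subr0.
rewrite /= !tail4S /tail4 !pow_expo4S qbinSS -addnn !exprD !exprS; ring.
Qed.

Lemma tails4_odd j : tails4 (j.*2).+1 = tail4 j j.
Proof. by rewrite /tails4 uphalf_double doubleK. Qed.

Lemma tails4_even j : tails4 (j.*2).+2 = tail4 j j.+1.
Proof. by rewrite /tails4 /= uphalf_double doubleK. Qed.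

Lemma b4_even j : b4 j.*2 = 2 ^+ (j.*2 + 2).
Proof. by rewrite /b4 -signr_odd odd_double expr0 subrr mulr0 subr0. Qed.

Lemma b4_odd j : b4 (j.*2).+1 = 2 ^+ j.+2 * (2 ^+ j.+1 - 1).
Proof.
rewrite /b4 -signr_odd /= odd_double /= expr1 opprK.
rewrite (_ : ((j.*2).+1 + 1) %/ 2 = j.+1)%N; last by rewrite -muln2; lia.
by rewrite (_ : ((j.*2).+1 + 2 = j.+2 + j.+1)%N) ?exprD ?exprS; [ring | rewrite -addnn; lia].
Qed.

Lemma tails4_rec k n :
  tails4 k n = tails4 k.+1 n - b4 k * xshift (tails4 k.+2) n.
Proof.
case: k => [|k].
  case: n => [|m]; first by rewrite mulr0 subr0.
  rewrite /= tail4S /tail4 pow_expo4S !qbinn0 /s_one /=; ring.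
rewrite -(odd_double_half k); case: (odd k); rewrite ?add0n ?add1n; set j := k./2.
  rewrite -[(j.*2).+4]/((j.+1).*2).+2 -[(j.*2).+3]/((j.+1).*2).+1.
  rewrite -[b4 _]/(b4 (j.+1).*2) tails4_even !tails4_odd tails4_even b4_even.
  exact: tail4_rec_even.
rewrite -[(j.*2).+3]/((j.+1).*2).+1 !tails4_odd tails4_even b4_odd.
exact: tail4_rec_odd.
Qed.

Lemma beta4_contract k : beta4 k = contract_beta b4 k.
Proof.
case: k => [|k] //; rewrite /contract_beta -[(k.*2).+2]/((k.+1).*2) b4_odd b4_even.
by rewrite /beta4 -addnn !exprD !exprS; ring.
Qed.

Lemma lam4_contract k : lam4 k.+1 = contract_lam b4 k.+1.
Proof.
rewrite /contract_lam /= b4_even b4_odd /lam4 (_ : (3 * k.+1 + 1 = k + k + k.+2 + 2)%N).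
  by rewrite -addnn !exprD !exprS; ring.
by lia.
Qed.

Lemma tails4_gf4 n : tails4 1%N n = gf4 n.
Proof. by rewrite /tails4 /tail4 /gf4 expo4_half mul0n addn0 qbinn0 mulr1. Qed.

Theorem mainTheorem4 :
  has_Jfraction beta4 lam4 gf4 /\ has_Sfraction b4 gf4.
Proof.
split.
  exact: has_Jfraction_contract beta4_contract lam4_contract (erefl _) tails4_rec tails4_gf4.
exact: has_Sfraction_tails (erefl _) tails4_rec tails4_gf4.
Qed.
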